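(* Let $f:\mathbb{R}^n\to\mathbb{R}$ be a continuously differentiable convex function, and $s$ a positive integer. Let $h(x)=\sum_{i=1}^n h_i(x_i)$ with each $h_i:\mathbb{R}\to\mathbb{R}$ convex and continuously differentiable, with $h$ supercoercive ($\lim_{\|x\|\to\infty}h(x)/\|x\|=\infty$), and assume: (i) if $x_k\to x$ then $D_h(x,x_k)\to0$; (ii) if $D_h(x,x_k)\to0$ for some $x$, then $x_k\to x$; (iii) if $D_h(x_{k+1},x_k)\to0$ then $\|x_{k+1}-x_k\|\to0$. Assume $L_hh-f$ is convex for some $L_h>0$ and $L>L_h$. Let $(x_k)$ be generated by the BPG algorithm with $h$ and $L$, and assume $(x_k)$ is bounded. Then $f(x_k)$ converges to a limit $f^*$ and there exist $K\in\mathbb{N}$ and $c>0$ such that $f(x_k)-f^*\le c/k$ for all $k\ge K$.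
   Context: $C_s=\{x\in\mathbb{R}^n:\|x\|_0\le s\}$ where $\|x\|_0$ is the number of nonzero entries. $D_h(y,x)=h(y)-h(x)-\nabla h(x)^T(y-x)$. BPG algorithm: start from $x_0\in C_s$ and for $k\ge0$ pick $x_{k+1}\in\operatorname{argmin}_{x\in C_s}\ \nabla f(x_k)^T(x-x_k)+LD_h(x,x_k)$. *)

(* Vectors of R^n are row vectors 'rV[R]_n (max-norm; all norms on R^n are
   equivalent, so every topological/metric notion used here is unaffected). *)
From HB Require Import structures.
From mathcomp Require Import all_boot all_order all_algebra.
From mathcomp Require Import all_classical all_reals all_analysis.
Set Implicit Arguments. Unset Strict Implicit. Unset Printing Implicit Defensive.
Import Order.TTheory GRing.Theory Num.Theory.
Import numFieldNormedType.Exports.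
Local Open Scope ring_scope.
Local Open Scope classical_set_scope.

Definition grad (R : realType) (n : nat) (f : 'rV[R]_n -> R^o) (x : 'rV[R]_n)
  : 'rV[R]_n := \row_i ('d f x (delta_mx 0 i)).

Definition dotv (R : realType) (n : nat) (u v : 'rV[R]_n) : R :=
  \sum_(i < n) u 0 i * v 0 i.

Definition C1 (R : realType) (n : nat) (f : 'rV[R]_n -> R^o) : Prop :=
  (forall x, differentiable f x) /\ continuous (grad f).

Definition C1R (R : realType) (g : R -> R) : Prop :=
  (forall x : R, derivable g x 1) /\ continuous (g^`()).

Definition convexR (R : realType) (n : nat) (f : 'rV[R]_n -> R^o) : Prop :=
  convex_function (setT : set (convex_lmodType 'rV[R]_n)) f.
Definition convex1 (R : realType) (g : R -> R^o) : Prop :=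
  convex_function (setT : set (convex_lmodType R^o)) g.

Definition Dh (R : realType) (n : nat) (h : 'rV[R]_n -> R^o) (y x : 'rV[R]_n) : R :=
  h y - h x - dotv (grad h x) (y - x).

Definition l0 (R : realType) (n : nat) (x : 'rV[R]_n) : nat :=
  #|[set i : 'I_n | x 0 i != 0]|.
Definition Cs (R : realType) (n : nat) (s : nat) : set 'rV[R]_n :=
  [set x | (l0 x <= s)%N].

Definition supercoercive (R : realType) (n : nat) (h : 'rV[R]_n -> R) : Prop :=
  forall M : R, exists r : R, forall x : 'rV[R]_n, r < `|x| -> M * `|x| <= h x.

Definition BPG_objective (R : realType) (n : nat) (f h : 'rV[R]_n -> R^o) (L : R)
  (xk x : 'rV[R]_n) : R := dotv (grad f xk) (x - xk) + L * Dh h x xk.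

Definition BPG_sequence (R : realType) (n s : nat) (f h : 'rV[R]_n -> R^o) (L : R)
  (xs : nat -> 'rV[R]_n) : Prop :=
  Cs (R:=R) s (xs 0%N) /\
  forall k : nat, Cs (R:=R) s (xs k.+1) /\
    forall y, Cs (R:=R) s y -> BPG_objective f h L (xs k) (xs k.+1) <= BPG_objective f h L (xs k) y.

From HB Require Import structures.
From mathcomp Require Import all_boot all_order all_algebra.
From mathcomp Require Import all_classical all_reals all_analysis.
From mathcomp Require Import zify.
From mathcomp.algebra_tactics Require Import ring lra.
Import Order.TTheory GRing.Theory Num.Theory.
Import numFieldNormedType.Exports.
Local Open Scope ring_scope.
Local Open Scope classical_set_scope.

(* The descent lemma (L_h h - f is convex) and the optimality of x_{k+1} against the
   competitor x_k give sufficient decrease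
     f(x_{k+1}) + (L - L_h) D_h(x_{k+1}, x_k) <= f(x_k),
   so f(x_k) decreases to f(x* ) for any cluster point x* of the bounded iterates, and
   D_h(x_{k+1}, x_k) -> 0, hence ||x_{k+1} - x_k|| -> 0.  Optimality of x_{k+1} along
   the segment towards a point u supported inside supp x_{k+1} (such segments stay in
   C_s) yields the three-point inequality
     f(x_{k+1}) <= f(u) + L (D_h(u, x_k) - D_h(u, x_{k+1})).
   Once an iterate x_K is Bregman-close to x* and steps are small, this inequality with
   u = x* keeps every later iterate close to x*, so the supports keep containing supp x*,
   and telescoping gives i (f(x_{K+i}) - f(x* )) <= L D_h(x*, x_K). *)

Section InnerProduct.
Context {R : realType} {n : nat}.
Implicit Types (u v w : 'rV[R]_n).

Lemma dotvDr u v w : dotv u (v + w) = dotv u v + dotv u w.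
Proof. by rewrite /dotv -big_split; apply: eq_bigr => i _; rewrite mxE mulrDr. Qed.

Lemma dotvZr u (a : R) v : dotv u (a *: v) = a * dotv u v.
Proof. by rewrite /dotv mulr_sumr; apply: eq_bigr => i _; rewrite mxE mulrCA. Qed.

Lemma dotv0r u : dotv u 0 = 0.
Proof. by rewrite /dotv big1 // => i _; rewrite mxE mulr0. Qed.

Lemma dotv_subr_split u v w z : dotv u (v - w) = dotv u (z - w) + dotv u (v - z).
Proof. by rewrite -dotvDr [in RHS]addrC addrA subrK. Qed.

Lemma diff_grad (g : 'rV[R]_n -> R^o) x d : 'd g x d = dotv (grad g x) d.
Proof.
rewrite {1}(row_sum_delta d) linear_sum /dotv; apply: eq_bigr => i _.
by rewrite linearZ /= mxE mulrC.
Qed.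

End InnerProduct.

Section OneSidedDerivative.
Context {R : realType}.

Lemma le_lim_at_right0 {q : R -> R} {l c : R} : q @ 0^'+ --> l ->
  (forall t, 0 < t <= 1 -> c <= q t) -> c <= l.
Proof.
move=> ql qc; apply: (cvgr_to_ge ql); near=> t; apply: qc.
by apply/andP; split; near: t; [exact: nbhs_right_gt | exact: nbhs_right_le].
Unshelve. all: end_near.
Qed.

Lemma ge_lim_at_right0 {q : R -> R} {l c : R} : q @ 0^'+ --> l ->
  (forall t, 0 < t <= 1 -> q t <= c) -> l <= c.
Proof.
move=> ql qc; apply: (cvgr_to_le ql); near=> t; apply: qc.
by apply/andP; split; near: t; [exact: nbhs_right_gt | exact: nbhs_right_le].
Unshelve. all: end_near.
Qed.

Context {n : nat}.

Lemma grad_quotient_cvg {g : 'rV[R]_n -> R^o} x d : differentiable g x ->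
  (fun t : R => (g (x + t *: d) - g x) / t) @ 0^'+ --> dotv (grad g x) d.
Proof.
move=> dg; have dd := @diff_derivable _ _ _ _ _ d dg.
rewrite -diff_grad -deriveE //.
have at_right_dnbhs : (0:R)^'+ `=>` (0:R)^'.
  move=> A; rewrite /at_right /dnbhs /within /=; apply: filterS => t At t0.
  by apply: At; rewrite gt_eqF.
have -> : (fun t : R => (g (x + t *: d) - g x) / t) =
    (fun t : R => t^-1 *: ((g \o shift x) (t *: d) - g x)).
  by apply/funext => t /=; rewrite mulrC [x + _]addrC.
exact: cvg_trans (cvg_app _ at_right_dnbhs) dd.
Qed.

End OneSidedDerivative.

Definition chord_convex {R : realType} {n : nat} (g : 'rV[R]_n -> R) :=
  forall x y (t : R), 0 <= t <= 1 -> g (x + t *: (y - x)) <= g x + t * (g y - g x).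

Section Convexity.
Context {R : realType} {n : nat}.

Lemma convexR_chord {g : 'rV[R]_n -> R^o} : convexR g -> chord_convex g.
Proof.
move=> cg x y t /andP[t0 t1].
have := cg (Itv01 t0 t1) y x; rewrite !inE /= => /(_ I I).
rewrite convRE /= /unstable.onem.
rewrite [X in g X <= _ -> _](_ : _ = x + t *: (y - x)); last first.
  by change (t *: y + (1 - t) *: x = x + t *: (y - x)); rewrite scalerBl scale1r scalerBr addrCA.
lra.
Qed.

Lemma convex_quotient_le {g : 'rV[R]_n -> R} {x y : 'rV[R]_n} {l : R} : chord_convex g ->
  (fun t : R => (g (x + t *: (y - x)) - g x) / t) @ 0^'+ --> l -> l <= g y - g x.
Proof.
move=> cg ql; apply: (ge_lim_at_right0 ql) => t /andP[t0 t1].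
by rewrite ler_pdivrMr // mulrC; have := cg x y t; rewrite ltW // t1; lra.
Qed.

Lemma convex_grad_le (g : 'rV[R]_n -> R^o) x y : differentiable g x ->
  chord_convex g -> dotv (grad g x) (y - x) <= g y - g x.
Proof. by move=> dg cg; apply: convex_quotient_le cg (grad_quotient_cvg x (y - x) dg). Qed.

Lemma Dh_ge0 (h : 'rV[R]_n -> R^o) y x : differentiable h x -> chord_convex h ->
  0 <= Dh h y x.
Proof. by move=> dh ch; rewrite /Dh subr_ge0; exact: convex_grad_le. Qed.

Lemma convex_grad_ge {f : 'rV[R]_n -> R^o} {x : 'rV[R]_n} (y : 'rV[R]_n) : differentiable f x ->
  chord_convex f -> f x + dotv (grad f x) (y - x) <= f y.
Proof. by move=> df cf; rewrite addrC -lerBrDr; exact: convex_grad_le. Qed.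

Lemma descent_lemma {f h : 'rV[R]_n -> R^o} {Lh : R} {x : 'rV[R]_n} (y : 'rV[R]_n) :
  differentiable f x -> differentiable h x ->
  chord_convex (fun z => Lh * h z - f z) ->
  f y <= f x + dotv (grad f x) (y - x) + Lh * Dh h y x.
Proof.
move=> df dh cvx.
have q_cvg : (fun t : R => (Lh * h (x + t *: (y - x)) - f (x + t *: (y - x))
    - (Lh * h x - f x)) / t) @ 0^'+ --> Lh * dotv (grad h x) (y - x) - dotv (grad f x) (y - x).
  have -> : (fun t : R => (Lh * h (x + t *: (y - x)) - f (x + t *: (y - x))
      - (Lh * h x - f x)) / t) =
      (fun t => Lh * ((h (x + t *: (y - x)) - h x) / t) - (f (x + t *: (y - x)) - f x) / t).
    by apply/funext => t; ring.
  exact: cvgB (cvgMl_tmp (grad_quotient_cvg x _ dh)) (grad_quotient_cvg x _ df).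
have := convex_quotient_le cvx q_cvg; rewrite /Dh.
(* Abstracting the gradients keeps lra from unfolding them when it compares atoms. *)
by move: (grad f x) (grad h x) => gf gh; lra.
Qed.

End Convexity.

Section Separable.
Context {R : realType} {n : nat} (hi : 'I_n -> R -> R^o).

Lemma separable_chord_convex : (forall i, convex1 (hi i)) ->
  chord_convex (fun x : 'rV[R]_n => \sum_(i < n) hi i (x 0 i)).
Proof.
move=> cvx x y t /andP[t0 t1].
rewrite -sumrB mulr_sumr -big_split /=; apply: ler_sum => i _.
have := cvx i (Itv01 t0 t1) (y 0 i) (x 0 i); rewrite !inE /= => /(_ I I).
rewrite convRE /= /unstable.onem !mxE.
rewrite [X in hi i X <= _ -> _](_ : _ = x 0 i + t * (y 0 i - x 0 i)); last first.
  by change (t * y 0 i + (1 - t) * x 0 i = x 0 i + t * (y 0 i - x 0 i)); ring.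
lra.
Qed.

Lemma separable_differentiable : (forall i (r : R), derivable (hi i) r 1) ->
  forall x, differentiable (fun x : 'rV[R]_n => \sum_(i < n) hi i (x 0 i) : R^o) x.
Proof.
move=> dhi x.
have -> : (fun x : 'rV[R]_n => \sum_(i < n) hi i (x 0 i) : R^o) =
    \sum_(i < n) (fun x : 'rV[R]_n => hi i (x 0 i)) by rewrite fct_sumE.
apply: differentiable_sum => i.
apply: (differentiable_comp (differentiable_coord _ _ _)).
exact/derivable1_diffP.
Qed.

End Separable.

Section Sequences.
Context {R : realType}.

Lemma cvg_dist_lt_inv {V : normedModType R} (y : nat -> V) (a : V) :
  (forall m, `|a - y m| < m.+1%:R^-1) -> y @ \oo --> a.
Proof.
move=> ya; apply/cvgrPdist_lt => e e0; near=> m; apply: lt_trans (ya m) _.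
rewrite invf_plt ?posrE ?ltr0Sn //; apply: (@le_lt_trans _ _ m%:R); last by rewrite ltr_nat.
by near: m; exact: nbhs_infty_ger.
Unshelve. all: end_near.
Qed.

Lemma bounded_rV_subseq_cvg {n : nat} {xs : nat -> 'rV[R]_n} {M : R} :
  (forall k, `|xs k| <= M) ->
  exists (x : 'rV[R]_n) (phi : nat -> nat),
    (forall m, (m <= phi m)%N) /\ (xs \o phi) @ \oo --> x.
Proof.
move=> xsM; pose A := closed_ball_ (fun v : 'rV[R]_n => `|v|) 0 M.
have inA k : A (xs k) by rewrite /A /closed_ball_ /= sub0r normrN.
have A_compact : compact A.
  apply: bounded_closed_compact; last exact: closed_closed_ball_.
  rewrite /bounded_set /bounded_near; near=> M' => v.
  rewrite /A /closed_ball_ /= sub0r normrN => vM; apply: le_trans vM _.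
  by near: M'; apply: nbhs_pinfty_ge; exact: num_real.
have [x [_ x_cluster]] : exists x, (A `&` cluster (xs @ \oo)) x.
  by apply: A_compact; exists 0%N => // k _; exact: inA.
have near_x m : exists k, (m <= k)%N /\ `|x - xs k| < m.+1%:R^-1.
  have inv_gt0 : 0 < m.+1%:R^-1 :> R by rewrite invr_gt0 ltr0Sn.
  have [] := x_cluster (xs @` [set k | (m <= k)%N]) (ball x m.+1%:R^-1) _
    (nbhsx_ballx x _ inv_gt0).
    by exists m => // k /= mk; exists k.
  by move=> _ [[k mk <-] xk]; exists k; rewrite -ball_normE in xk.
have [phi phiP] := choice near_x.
exists x, phi; split=> [m|]; first exact: (phiP m).1.
exact: cvg_dist_lt_inv (fun m => (phiP m).2).
Unshelve. all: end_near.
Qed.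

Lemma nonincreasing_subseq_cvg {u : nat -> R} {phi : nat -> nat} {l : R} :
  {homo u : j k / (j <= k)%N >-> k <= j} -> (forall m, (m <= phi m)%N) ->
  (u \o phi) @ \oo --> l -> u @ \oo --> l /\ forall k, l <= u k.
Proof.
move=> u_noninc phi_ge u_phi_l.
have l_le k : l <= u k.
  apply: (cvgr_to_le u_phi_l); near=> m; apply: u_noninc.
  by apply: leq_trans (phi_ge m); near: m; exact: nbhs_infty_ge.
split=> //; apply/cvgrPdist_lt => e e0.
have [N _ uN] := (cvgrPdist_lt _ _).1 u_phi_l e e0.
near=> k; have := uN N (leqnn N); rewrite /= !(distrC l) !ger0_norm ?subr_ge0 //.
apply: le_lt_trans; rewrite lerD2r; apply: u_noninc.
by near: k; exact: nbhs_infty_ge.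
Unshelve. all: end_near.
Qed.

Lemma eps_delta_of_seq_cvg {V : normedModType R} {D : V -> R} {x : V} :
  (forall y, 0 <= D y) ->
  (forall y : nat -> V, (fun k => D (y k)) @ \oo --> 0 -> y @ \oo --> x) ->
  forall e, 0 < e -> exists2 d, 0 < d & forall y, D y < d -> `|y - x| < e.
Proof.
move=> D_ge0 seq_cvg e e0; apply: contrapT => no_delta.
have far m : exists y, D y < m.+1%:R^-1 /\ e <= `|y - x|.
  apply: contrapT => no_y; apply: no_delta; exists m.+1%:R^-1.
    by rewrite invr_gt0 ltr0Sn.
  by move=> y Dy; rewrite ltNge; apply/negP => ey; apply: no_y; exists y.
have [y yP] := choice far.
have y_x : y @ \oo --> x.
  apply: seq_cvg; apply: cvg_dist_lt_inv => m.
  by rewrite sub0r normrN ger0_norm //; exact: (yP m).1.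
have [N _ yN] := (cvgrPdist_lt _ _).1 y_x e e0.
by have := yN N (leqnn N); rewrite distrC ltNge (yP N).2.
Qed.

End Sequences.

Section Support.
Context {R : realType} {n : nat}.

Lemma norm_coord_le (v : 'rV[R]_n) i : `|v 0 i| <= `|v|.
Proof.
have /mapP[j _ ->] : `|v ord0 i| \in [seq `|v x.1 x.2| | x : 'I_1 * 'I_n].
  by apply/mapP; exists (ord0, i) => //=; rewrite mem_enum.
by rewrite [leRHS]/Num.norm /= mx_normrE; apply/bigmax_geP; right; exists j.
Qed.

Lemma support_stable (v : 'rV[R]_n) : exists2 e : R, 0 < e &
  forall y, `|y - v| < e -> forall i, v 0 i != 0 -> y 0 i != 0.
Proof.
exists (\big[Order.min/1]_(i | v 0 i != 0) `|v 0 i|).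
  by apply: lt_bigmin => // i; rewrite normr_gt0.
move=> y yv i vi; apply/negP => /eqP yi0.
have := norm_coord_le (y - v) i; rewrite !mxE yi0 sub0r normrN => vi_le.
by have := lt_le_trans (le_lt_trans vi_le yv)
  (bigmin_le_cond 1 (fun j => `|v 0 j|) vi); rewrite ltxx.
Qed.

Lemma l0_segment_le {z u : 'rV[R]_n} (t : R) :
  (forall i, u 0 i != 0 -> z 0 i != 0) -> (l0 (z + t *: (u - z)) <= l0 z)%N.
Proof.
move=> supp; apply: subset_leq_card; apply/fintype.subsetP => i.
rewrite !inE /= !mxE; apply: contraNN => /eqP zi0.
case: (eqVneq (u 0 i) 0) => [ui0|/supp]; last by rewrite zi0 eqxx.
by rewrite zi0 ui0 subrr mulr0 addr0.
Qed.

End Support.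

Lemma sublinear_rate {R : realType} {a d : nat -> R} {L : R} (K : nat) :
  0 < L -> (forall k, 0 <= a k) -> (forall k, a k.+1 <= a k) -> (forall k, 0 <= d k) ->
  (forall j, (K <= j)%N -> d j <= d K -> a j.+1 <= L * (d j - d j.+1)) ->
  exists (K' : nat) (c : R), 0 < c /\ forall k, (K' <= k)%N -> a k <= c / k%:R.
Proof.
move=> L0 a_ge0 a_noninc d_ge0 step.
have telescope i : d (i + K)%N <= d K /\ i%:R * a (i + K)%N <= L * (d K - d (i + K)%N).
  elim: i => [|i [dK ia]]; first by rewrite mul0r subrr mulr0.
  have := step _ (leq_addl i K) dK; rewrite addSn => a_step.
  have d_dec : d (i + K).+1 <= d (i + K)%N.
    by rewrite -subr_ge0 -(pmulr_rge0 _ L0); apply: le_trans a_step.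
  split; first exact: le_trans dK.
  have : i%:R * a (i + K).+1 <= i%:R * a (i + K)%N by apply: ler_wpM2l.
  rewrite -natr1; lra.
exists K.*2.+1, (2 * (L * d K) + 1); split.
  by have := mulr_ge0 (ltW L0) (d_ge0 K); lra.
(* For k > 2K the telescoped bound at i = k - K >= k / 2 gives the rate. *)
move=> k Kk; have Kk' : (K <= k)%N by lia.
have k_gt0 : (0 < k)%N by lia.
rewrite ler_pdivlMr ?ltr0n //.
have [_ rate] := telescope (k - K)%N; rewrite subnK // in rate.
have : a k * k%:R <= a k * (2 * (k - K)%:R).
  by apply: ler_wpM2l => //; rewrite -natrM ler_nat; lia.
have := mulr_ge0 (ltW L0) (d_ge0 k); lra.
Qed.

Section BPG.
Context {R : realType} {n s : nat} {f h : 'rV[R]_n -> R^o} {Lh L : R} {xs : nat -> 'rV[R]_n}.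
Hypothesis f_diff : forall x, differentiable f x.
Hypothesis f_convex : chord_convex f.
Hypothesis h_diff : forall x, differentiable h x.
Hypothesis h_convex : chord_convex h.
Hypothesis Lhh_f_convex : chord_convex (fun x => Lh * h x - f x).
Hypothesis Lh_gt0 : 0 < Lh.
Hypothesis Lh_lt_L : Lh < L.
Hypothesis xs_BPG : BPG_sequence s f h L xs.

Let Dh_h_ge0 y x : 0 <= Dh h y x := Dh_ge0 h y x (h_diff x) h_convex.

Lemma BPG_Cs k : Cs s (xs k).
Proof. by case: k => [|k]; [exact: xs_BPG.1 | exact: (xs_BPG.2 k).1]. Qed.

Lemma BPG_objective_self x : BPG_objective f h L x x = 0.
Proof.
rewrite /BPG_objective /Dh; move: (grad f x) (grad h x) => gf gh.
by rewrite subrr !dotv0r !subrr mulr0 addr0.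
Qed.

Lemma BPG_sufficient_decrease k :
  f (xs k.+1) + (L - Lh) * Dh h (xs k.+1) (xs k) <= f (xs k).
Proof.
have := (xs_BPG.2 k).2 _ (BPG_Cs k); rewrite BPG_objective_self /BPG_objective.
have := descent_lemma (xs k.+1) (f_diff (xs k)) (h_diff (xs k)) Lhh_f_convex.
by rewrite /Dh; move: (grad f (xs k)) (grad h (xs k)) => gf gh; lra.
Qed.

Lemma BPG_nonincreasing : {homo (fun k => f (xs k)) : j k / (j <= k)%N >-> k <= j}.
Proof.
apply/nonincreasing_seqP => k; have := BPG_sufficient_decrease k.
have : 0 <= L - Lh by rewrite subr_ge0 ltW.
by move/mulr_ge0/(_ (Dh_h_ge0 (xs k.+1) (xs k))); lra.
Qed.

Lemma BPG_objective_first_order {x z d : 'rV[R]_n} :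
  (forall t, 0 < t <= 1 ->
     BPG_objective f h L x z <= BPG_objective f h L x (z + t *: d)) ->
  0 <= dotv (grad f x) d - L * dotv (grad h x) d + L * dotv (grad h z) d.
Proof.
move=> opt; apply: (le_lim_at_right0 (cvgD (cvg_cst _)
  (cvgMl_tmp (a := L) (grad_quotient_cvg z d (h_diff z))))) => t /andP[t0 t1].
rewrite !fctE /=.
have := opt t; rewrite t0 t1 => /(_ isT).
rewrite /BPG_objective /Dh; move: (grad f x) (grad h x) => gf gh.
rewrite (addrAC z) !(dotvDr _ (z - x)) !dotvZr; set Q := (h (z + t *: d) - h z) / t.
have -> : h (z + t *: d) = h z + t * Q by rewrite /Q mulrC divfK ?gt_eqF // addrCA subrr addr0.
by rewrite -(pmulr_rge0 _ t0); lra.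
Qed.

Lemma BPG_three_point k (u : 'rV[R]_n) : (forall i, u 0 i != 0 -> xs k.+1 0 i != 0) ->
  f (xs k.+1) <= f u + L * (Dh h u (xs k) - Dh h u (xs k.+1)).
Proof.
move=> supp; set x := xs k; set z := xs k.+1.
have opt t : 0 < t <= 1 ->
    BPG_objective f h L x z <= BPG_objective f h L x (z + t *: (u - z)).
  move=> _; apply: (xs_BPG.2 k).2; rewrite /Cs /=.
  exact: leq_trans (l0_segment_le t supp) (BPG_Cs k.+1).
have := BPG_objective_first_order opt.
have := descent_lemma z (f_diff x) (h_diff x) Lhh_f_convex.
have := convex_grad_ge u (f_diff x) f_convex.
have : Lh * Dh h z x <= L * Dh h z x by rewrite ler_wpM2r ?Dh_h_ge0 ?ltW.
rewrite /Dh; move: (grad f x) (grad h x) (grad h z) => gf ghx ghz.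
by rewrite (dotv_subr_split gf u x z) (dotv_subr_split ghx u x z); lra.
Qed.

Lemma BPG_three_point_near (u : 'rV[R]_n) (e : R) :
  (forall y, `|y - u| < e -> forall i, u 0 i != 0 -> y 0 i != 0) ->
  forall j, `|xs j - u| < e / 2 -> `|xs j.+1 - xs j| < e / 2 ->
  f (xs j.+1) <= f u + L * (Dh h u (xs j) - Dh h u (xs j.+1)).
Proof.
move=> supp j close step; apply: BPG_three_point; apply: supp.
by have := ler_distD (xs j) (xs j.+1) u; lra.
Qed.

Lemma BPG_steps_cvg0 {l : R} : (fun k => f (xs k)) @ \oo --> l ->
  (fun k => Dh h (xs k.+1) (xs k)) @ \oo --> (0 : R).
Proof.
move=> fxs_l; have fxs1_l : (fun k => f (xs k.+1)) @ \oo --> l.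
  by rewrite (cvg_shiftS (fun k => f (xs k))).
have gap_cvg : (fun k => (f (xs k) - f (xs k.+1)) / (L - Lh)) @ \oo --> 0.
  by rewrite -(mul0r (L - Lh)^-1) -(subrr l); exact: cvgMr_tmp (cvgB fxs_l fxs1_l).
apply: (squeeze_cvgr _ (cvg_cst 0) gap_cvg); near=> k; rewrite Dh_h_ge0 /=.
rewrite ler_pdivlMr ?subr_gt0 //; have := BPG_sufficient_decrease k; lra.
Unshelve. all: end_near.
Qed.

Lemma BPG_sublinear_rate {xstar : 'rV[R]_n} {phi : nat -> nat} :
  (forall k, f xstar <= f (xs k)) ->
  (forall m, (m <= phi m)%N) -> (fun m => Dh h xstar (xs (phi m))) @ \oo --> (0 : R) ->
  (fun k => `|xs k.+1 - xs k|) @ \oo --> (0 : R) ->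
  (forall e, 0 < e -> exists2 d, 0 < d & forall y, Dh h xstar y < d -> `|y - xstar| < e) ->
  exists (K : nat) (c : R), 0 < c /\
    forall k, (K <= k)%N -> f (xs k) - f xstar <= c / k%:R.
Proof.
move=> f_ge phi_ge Dh_phi steps_cvg0 Dh_ball.
have [eps eps_gt0 supp] := support_stable xstar.
have eps2_gt0 : 0 < eps / 2 by rewrite divr_gt0.
have [del del_gt0 Dh_small] := Dh_ball _ eps2_gt0.
have [N _ steps] := (cvgrPdist_lt _ _).1 steps_cvg0 _ eps2_gt0.
have [N' _ Dh_phi_small] := (cvgrPdist_lt _ _).1 Dh_phi _ del_gt0.
apply: (sublinear_rate (a := fun k => f (xs k) - f xstar) (d := Dh h xstar \o xs)
  (phi (maxn N N')) (lt_trans Lh_gt0 Lh_lt_L)) => [k|k|k|j Kj dj] /=.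
- by rewrite subr_ge0.
- by rewrite lerD2r BPG_nonincreasing.
- exact: Dh_h_ge0.
have close : `|xs j - xstar| < eps / 2.
  apply: Dh_small; apply: le_lt_trans dj _.
  by have := Dh_phi_small _ (leq_maxr N N'); rewrite /= sub0r normrN ger0_norm.
have step : `|xs j.+1 - xs j| < eps / 2.
  have Nj : (N <= j)%N by apply: leq_trans Kj; apply: leq_trans (phi_ge _); exact: leq_maxl.
  by have := steps _ Nj; rewrite /= sub0r normrN normr_id.
by rewrite lerBlDl; exact: BPG_three_point_near supp _ close step.
Qed.

End BPG.

Theorem corollaryA6 (R : realType) (n s : nat)
  (f : 'rV[R]_n -> R^o) (hi : 'I_n -> R -> R^o) (Lh L : R)
  (xs : nat -> 'rV[R]_n) :
  let h : 'rV[R]_n -> R^o := fun x => \sum_(i < n) hi i (x 0 i) in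
  C1 f -> convexR f -> (0 < s)%N ->
  (forall i, convex1 (hi i) /\ C1R (hi i)) ->
  supercoercive h ->
  (forall (y : nat -> 'rV[R]_n) (x : 'rV[R]_n),
      y @ \oo --> x -> (fun k => Dh h x (y k)) @ \oo --> (0 : R)) ->
  (forall (y : nat -> 'rV[R]_n) (x : 'rV[R]_n),
      (fun k => Dh h x (y k)) @ \oo --> (0 : R) -> y @ \oo --> x) ->
  (forall y : nat -> 'rV[R]_n,
      (fun k => Dh h (y k.+1) (y k)) @ \oo --> (0 : R) ->
      (fun k => `|y k.+1 - y k|) @ \oo --> (0 : R)) ->
  0 < Lh -> convexR (fun x => Lh * h x - f x) -> Lh < L ->
  BPG_sequence s f h L xs ->
  (exists M : R, forall k, `|xs k| <= M) ->
  exists fstar : R,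
    (fun k => f (xs k)) @ \oo --> fstar /\
    exists (K : nat) (c : R), 0 < c /\
      forall k : nat, (K <= k)%N -> f (xs k) - fstar <= c / k%:R.
Proof.
move=> h [f_diff _] f_cvx _ hi_C1 _ Dh_cvg0 Dh_cvg0_inv Dh_steps Lh_gt0 Lhh_f_cvx
  Lh_lt_L xs_BPG [M xs_bnd].
have h_diff : forall x, differentiable h x.
  by apply: separable_differentiable => i; exact: (hi_C1 i).2.1.
have h_cvx : chord_convex h by apply: separable_chord_convex => i; exact: (hi_C1 i).1.
have Lhh_f_chord := convexR_chord Lhh_f_cvx.
have [xstar [phi [phi_ge xs_phi]]] := bounded_rV_subseq_cvg xs_bnd.
have [fxs_cvg f_ge] := nonincreasing_subseq_cvg
  (BPG_nonincreasing f_diff h_diff h_cvx Lhh_f_chord Lh_lt_L xs_BPG) phi_ge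
  (cvg_comp _ _ xs_phi (differentiable_continuous (f_diff xstar))).
exists (f xstar); split=> //.
apply: (BPG_sublinear_rate f_diff (convexR_chord f_cvx) h_diff h_cvx Lhh_f_chord Lh_gt0
  Lh_lt_L xs_BPG f_ge phi_ge (Dh_cvg0 _ _ xs_phi)).
- exact: Dh_steps (BPG_steps_cvg0 f_diff h_diff h_cvx Lhh_f_chord Lh_lt_L xs_BPG fxs_cvg).
- exact: eps_delta_of_seq_cvg (fun y => Dh_ge0 h xstar y (h_diff y) h_cvx)
    (Dh_cvg0_inv ^~ xstar).
Qed.
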